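(* Let $F$ be an APN bijection of $\mathbb F_2^m$ with $F(0)=0$ and $S=STS(\mathcal H^n)$. Then every rotation line at every nonzero point of the self-embedding $S\cup F(S)$ has at least $6$ and at most $2^m-2$ points.
   Context: $n=2^m-1$; identify $\mathbb F_2^m$ with $GF(2^m)$. $F$ is APN if for all $a,b$ with $b\ne0$ the equation $F(x)+F(x+b)=a$ has at most two solutions. $S=STS(\mathcal H^n)$ is the set of 3-subsets $\{a,b,c\}$ of nonzero elements with $a+b+c=0$; $F(S)=\{\{F(a),F(b),F(c)\}:\{a,b,c\}\in S\}$. For nonzero $a$, let $P_a=\mathbb F_2^m\setminus\{0,a\}$, $s_a(y)=a+y$ and $\psi_a(y)=F(F^{-1}(a)+F^{-1}(y))$. The rotation lines at $a$ are the orbits on $P_a$ of the group generated by $s_a,\psi_a$; the number of points of a rotation line is the size of the orbit. *)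

(* F_2^m is modelled as the row space 'rV['F_2]_m
   (only the additive structure of GF(2^m) is used). *)
From HB Require Import structures.
From mathcomp Require Import all_boot all_order all_fingroup all_algebra.
Set Implicit Arguments. Unset Strict Implicit. Unset Printing Implicit Defensive.
Import GRing.Theory.
Local Open Scope ring_scope.

Notation V m := 'rV['F_2]_m.

Definition APN (m : nat) (F : V m -> V m) : Prop :=
  forall a b : V m, b != 0 -> leq #|[set x : V m | F x + F (x + b) == a]| 2.

Definition Pa (m : nat) (a : V m) : {set V m} := [set y | (y != 0) && (y != a)].

Definition s_ (m : nat) (a y : V m) : V m := a + y.

Definition psi_ (m : nat) (F : {perm V m}) (a y : V m) : V m :=
  F ((F^-1)%g a + (F^-1)%g y).

(* one step of the group <s_a, psi_a> acting on P_a: apply s_a (an involution),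
   psi_a, or psi_a^{-1} *)
Definition rot_step (m : nat) (F : {perm V m}) (a : V m) : rel (V m) :=
  fun y z => [&& y \in Pa a, z \in Pa a &
              [|| z == s_ a y, z == psi_ F a y | y == psi_ F a z]].

Definition rotation_line (m : nat) (F : {perm V m}) (a y : V m) : {set V m} :=
  [set z | connect (rot_step F a) y z].

(** The generators [s_a] and [psi_a] are fixed-point-free involutions of [P_a],
    so the six points [y], [s y], [psi y], [s psi y], [psi s y], [s psi s y] of
    the rotation line through [y] are distinct as soon as neither [psi_a s_a]
    nor its square has a fixed point.  Since [x] and [x + w] always share a
    fibre of the derivative [x |-> F x + F (x + w)], APN says that such a pair
    is a whole fibre; a fixed point of [psi_a s_a] or of its square would put a
    third point into one.  The upper bound holds because rotation lines lie in
    [P_a]. *)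
From HB Require Import structures.
From mathcomp Require Import all_boot all_order all_fingroup all_algebra.
Local Open Scope ring_scope.
Import GRing.Theory.
Set Implicit Arguments.
Unset Strict Implicit.

Section BooleanGroup.
Variable V : zmodType.
Hypothesis addvv : forall x : V, x + x = 0.

Lemma addKv (x y : V) : x + (x + y) = y.
Proof. by rewrite addrA addvv add0r. Qed.

Lemma addvK (x y : V) : y + x + x = y.
Proof. by rewrite -addrA addvv addr0. Qed.

Lemma addv_eq0 (x y : V) : (x + y == 0) = (x == y).
Proof.
apply/eqP/eqP => [xy0|->]; last exact: addvv.
by rewrite -(addvK y x) xy0 add0r.
Qed.

Lemma eq_addv_id (x y : V) : (x == x + y) = (y == 0).
Proof. by rewrite -addv_eq0 addKv. Qed.

End BooleanGroup.

Lemma addrr_F2 m (x : 'rV['F_2]_m) : x + x = 0.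
Proof.
by apply/rowP => i; rewrite !mxE; exact: (addrr_pchar2 (pchar_Fp (isT : prime 2))).
Qed.

Lemma uniq_dihedral_six (T : eqType) (P : pred T) (s p : T -> T) :
    (forall x, P x -> P (s x)) -> (forall x, P x -> P (p x)) ->
    involutive s -> involutive p ->
    (forall x, P x -> s x != x) -> (forall x, P x -> p x != x) ->
    (forall x, P x -> p x != s x) -> (forall x, P x -> p (s x) != s (p x)) ->
  forall y, P y -> uniq [:: y; s y; p y; s (p y); p (s y); s (p (s y))].
Proof.
move=> sP pP sK pK s_fix p_fix ps_s psp y Py.
have Psy := sP _ Py; have Ppy := pP _ Py; have Ppsy := pP _ Psy.
have s_eq := inj_eq (can_inj sK); have p_eq := inj_eq (can_inj pK).
have e1 := s_fix _ Py; have e2 := p_fix _ Py; have e3 := ps_s _ Py.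
have e4 := psp _ Py; have e5 := p_fix _ Psy; have e6 := s_fix _ Ppy.
have e7 := s_fix _ Ppsy.
rewrite /= !inE !negb_or; repeat (apply/andP; split).
all: try by rewrite eq_sym.
all: try by [].
- by rewrite -(s_eq y) sK eq_sym.
- by rewrite -(p_eq y) pK.
- by rewrite -(s_eq y) sK eq_sym.
- by rewrite s_eq eq_sym.
- by rewrite s_eq -(p_eq y) pK.
- by rewrite p_eq eq_sym.
- by rewrite -(s_eq (p y)) sK eq_sym.
- by rewrite s_eq p_eq eq_sym.
Qed.

Lemma APN_derivative_fibre m (F : 'rV['F_2]_m -> 'rV['F_2]_m)
    (w x z : 'rV['F_2]_m) :
    APN F -> w != 0 -> F z + F (z + w) = F x + F (x + w) ->
  (z == x) || (z == x + w).
Proof.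
move=> F_APN w0 Fzx; apply/negPn/negP; rewrite negb_or => /andP [zx zxw].
pose D := [set t | F t + F (t + w) == F x + F (x + w)].
have xwK := addvK (@addrr_F2 m).
have /card_geqP four_in_D : exists s, [/\ uniq s, size s = 4%N & {subset s <= D}].
  exists [:: x; x + w; z; z + w]; split=> //=; last first.
    apply/allP; rewrite /= !inE !xwK (addrC (F (x + w))) (addrC (F (z + w))).
    by rewrite Fzx !eqxx.
  rewrite !inE !negb_or !(eq_addv_id (@addrr_F2 m)) w0 (inj_eq (addIr w)).
  by rewrite -[x in x != z + w](xwK w) (inj_eq (addIr w)) ![_ == z]eq_sym zx zxw.
by have := leq_trans four_in_D (F_APN _ _ w0).
Qed.

Section RotationGroup.
Variables (m : nat) (F : {perm 'rV['F_2]_m}).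
Hypotheses (F0 : F 0 = 0) (F_APN : APN F).
Variable a : 'rV['F_2]_m.
Hypothesis a_neq0 : a != 0.

Local Notation s := (s_ a).
Local Notation psi := (psi_ F a).
Local Notation alpha := ((F^-1)%g a).

Let addKx := addKv (@addrr_F2 m).
Let addxK := addvK (@addrr_F2 m).
Let addx_eq0 := addv_eq0 (@addrr_F2 m).
Let eq_addx_id := eq_addv_id (@addrr_F2 m).

Lemma invF_eq0 y : ((F^-1)%g y == 0) = (y == 0).
Proof. by rewrite -(inj_eq (@perm_inj _ F)) permKV F0. Qed.

Lemma invF_eq_alpha y : ((F^-1)%g y == alpha) = (y == a).
Proof. by rewrite (inj_eq perm_inj). Qed.

Lemma alpha_neq0 : alpha != 0.
Proof. by rewrite invF_eq0. Qed.

Lemma s_in_Pa y : y \in Pa a -> s y \in Pa a.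
Proof.
by rewrite !inE /s_ => /andP [y0 ya]; rewrite addx_eq0 eq_sym ya eq_sym eq_addx_id.
Qed.

Lemma psi_in_Pa y : y \in Pa a -> psi y \in Pa a.
Proof.
rewrite !inE /psi_ => /andP [y0 ya].
apply/andP; split.
  by rewrite -F0 (inj_eq perm_inj) addx_eq0 eq_sym invF_eq_alpha.
by rewrite -[a in _ != a](permKV F) (inj_eq perm_inj) eq_sym eq_addx_id invF_eq0.
Qed.

Lemma s_involutive : involutive s.
Proof. exact: addKx. Qed.

Lemma psi_involutive : involutive psi.
Proof. by move=> y; rewrite /psi_ permK addKx permKV. Qed.

Lemma s_fixfree y : s y != y.
Proof. by rewrite /s_ addrC eq_sym eq_addx_id. Qed.

Lemma psi_fixfree y : psi y != y.
Proof.
rewrite /psi_ -{2}(permKV F y) (inj_eq perm_inj).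
by rewrite addrC eq_sym eq_addx_id alpha_neq0.
Qed.

(* A fixed point [y] of [psi s] puts [u = F^-1 y] next to [0] in the fibre
   over [a] of the derivative of [F] in direction [alpha]. *)
Lemma psi_neq_s y : y \in Pa a -> psi y != s y.
Proof.
rewrite inE /psi_ /s_ => /andP [y0 ya]; apply/eqP => psi_y.
have := @APN_derivative_fibre _ F alpha 0 ((F^-1)%g y) F_APN alpha_neq0.
rewrite [_ + alpha]addrC psi_y permKV F0 !add0r permKV [y + _]addrC addxK => /(_ erefl).
by rewrite invF_eq0 invF_eq_alpha (negPf y0) (negPf ya).
Qed.

(* A fixed point [y] of [(psi s)^2] puts [alpha + u] next to [u = F^-1 y] in
   the fibre over [a] of the derivative in direction [u + F^-1 (a + y)]. *)
Lemma psi_s_neq_s_psi y : y \in Pa a -> psi (s y) != s (psi y).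
Proof.
move=> Py; have := psi_neq_s Py; move: Py; rewrite inE /psi_ /s_.
case/andP=> y0 ya psi_neq_s_y; apply/eqP => psi_s_y.
set u := (F^-1)%g y in psi_neq_s_y psi_s_y; set v := (F^-1)%g (a + y) in psi_s_y.
have uv : u + v != 0.
  by rewrite addx_eq0 (inj_eq perm_inj) addrC eq_addx_id.
have := @APN_derivative_fibre _ F (u + v) u (alpha + u) F_APN uv.
rewrite -addrA !addKx psi_s_y !permKV [F _ + _]addrC [y + _]addrC !addxK => /(_ erefl).
rewrite addrC eq_sym eq_addx_id (negPf alpha_neq0) /= => /eqP alpha_u.
by rewrite addrC alpha_u permKV eqxx in psi_neq_s_y.
Qed.

Lemma rot_step_s y : y \in Pa a -> rot_step F a y (s y).
Proof. by move=> Py; rewrite /rot_step Py s_in_Pa ?eqxx. Qed.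

Lemma rot_step_psi y : y \in Pa a -> rot_step F a y (psi y).
Proof. by move=> Py; rewrite /rot_step Py psi_in_Pa ?eqxx ?orbT. Qed.

Lemma rotation_line_sub_Pa y : y \in Pa a -> rotation_line F a y \subset Pa a.
Proof.
move=> Py; apply/subsetP => z; rewrite inE => /connectP [p + ->] {z}.
by elim: p y Py => [|x p IHp] y Py //= /andP [/and3P [_ Px _]] /(IHp x Px).
Qed.

Lemma card_Pa : #|Pa a| = (2 ^ m - 2)%N.
Proof.
have -> : Pa a = ~: [set 0; a] by apply/setP => y; rewrite !inE negb_or.
have := cardsC [set 0; a]; rewrite cards2 eq_sym a_neq0 card_mx card_Fp //= mul1n.
by move=> <-; rewrite addKn.
Qed.

Lemma dihedral_six_in_rotation_line y : y \in Pa a ->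
  {subset [:: y; s y; psi y; s (psi y); psi (s y); s (psi (s y))]
     <= rotation_line F a y}.
Proof.
move=> Py; have Psy := s_in_Pa Py; have Ppy := psi_in_Pa Py.
have Ppsy := psi_in_Pa Psy.
have y_psi_s_y :=
  connect_trans (connect1 (rot_step_s Py)) (connect1 (rot_step_psi Psy)).
apply/allP; rewrite /= !inE connect0 (connect1 (rot_step_s Py)).
rewrite (connect1 (rot_step_psi Py)) y_psi_s_y.
rewrite (connect_trans (connect1 (rot_step_psi Py)) (connect1 (rot_step_s Ppy))).
by rewrite (connect_trans y_psi_s_y (connect1 (rot_step_s Ppsy))).
Qed.

Lemma six_le_card_rotation_line y : y \in Pa a -> (6 <= #|rotation_line F a y|)%N.
Proof.
move=> Py; apply/card_geqP.
exists [:: y; s y; psi y; s (psi y); psi (s y); s (psi (s y))]; split=> //.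
  apply: (uniq_dihedral_six (P := mem (Pa a))) Py.
  - exact: s_in_Pa.
  - exact: psi_in_Pa.
  - exact: s_involutive.
  - exact: psi_involutive.
  - by move=> x _; apply: s_fixfree.
  - by move=> x _; apply: psi_fixfree.
  - exact: psi_neq_s.
  - exact: psi_s_neq_s_psi.
exact: dihedral_six_in_rotation_line.
Qed.

End RotationGroup.

Theorem mainTheorem15 (m : nat) (hm : (3 <= m)%N) (F : {perm 'rV['F_2]_m})
  (hF0 : F 0 = 0) (hAPN : APN F) :
  forall a : 'rV['F_2]_m, a != 0 ->
  forall y : 'rV['F_2]_m, y \in Pa a ->
    (6 <= #|rotation_line F a y| <= 2 ^ m - 2)%N.
Proof.
move=> a a_neq0 y Py; rewrite (six_le_card_rotation_line hF0 hAPN a_neq0 Py) /=.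
by rewrite -(card_Pa a_neq0) subset_leq_card // rotation_line_sub_Pa.
Qed.
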